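(* The sets $\mathcal{U}_{ME}=\{(M,q)\mid ME[U](M)\le q\}$ and $\mathcal{U}_{GE}=\{(M,q)\mid GE[U](M)\le q\}$ are safety hyperproperties. That is, for every rational $q$, the sets of programs $\{M\mid ME[U](M)\le q\}$ and $\{M\mid GE[U](M)\le q\}$ are safety hyperproperties.
   Context: Stores map variables to values; $H$ is the high input variable and $O$ the low output variable. A trace is a sequence of stores. For a finite trace $t$, $t\circ t'$ is concatenation. A program is a set $M$ of infinite traces that is deterministic (two traces with the same initial value of $H$ are equal) and has a finite nonempty input domain $\mathbb{H}_M=\{\sigma_0(H)\}$. Input domains are unbounded in size. $M(h)$ is the output trace $(\sigma_1(O),\sigma_2(O),\dots)$ of the trace of $M$ starting with $H=h$. $\bot$ denotes termination. $M(h)=o$ means that for all $i$, $o_i=\bot$ or $M(h)_i=\bot$ or $M(h)_i=o_i$. For a distribution $\mu$ on $\mathbb{H}_M$, $\mu(O=o)=\sum_{h:M(h)=o}\mu(H=h)$, with conditional probabilities induced accordingly. $U$ is the uniform distribution on $\mathbb{H}_M$. Min-entropy QIF (log base 2): $\mathcal{V}[\mu](X)=\max_x\mu(X=x)$, $\mathcal{V}[\mu](X|Y)=\sum_y\mu(Y=y)\max_x\mu(X=x|Y=y)$, and $ME[\mu](M)=\log\frac1{\mathcal{V}[\mu](H)}-\log\frac1{\mathcal{V}[\mu](H|O)}$. Guessing-entropy QIF: $\mathcal{G}[\mu](X)=\sum_i i\,\mu(X=x_i)$ with the $x_i$ ordered by non-increasing probability; $\mathcal{G}[\mu](X|Y)=\sum_y\mu(Y=y)\sum_i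 i\,\mu(X=x_i|Y=y)$ with the analogous ordering for each $y$; and $GE[\mu](M)=\mathcal{G}[\mu](H)-\mathcal{G}[\mu](H|O)$. $\mathit{Prop}$ is the set of programs; $\mathit{Obs}$ is the set of deterministic finite sets of finite traces. For $S\in\mathit{Obs}$ and $T\in\mathit{Prop}$, $S\le T$ iff every $t\in S$ has some $t'$ with $t\circ t'\in T$. $P\subseteq\mathit{Prop}$ is a safety hyperproperty iff for every $S\in\mathit{Prop}\setminus P$ there is $T\in\mathit{Obs}$ with $T\le S$ such that no $S'\in\mathit{Prop}$ with $T\le S'$ belongs to $P$. A set $\mathcal{P}$ of pairs (program, rational) is a safety hyperproperty iff $\{M\mid(M,q)\in\mathcal{P}\}$ is one for every rational $q$. *)

From Stdlib Require Import Reals List Permutation Sorted ClassicalEpsilon QArith Qreals.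
Open Scope R_scope.

Definition var := nat.
Definition H : var := 0%nat.   (* high input variable *)
Definition O : var := 1%nat.   (* low output variable *)
Definition val := nat.         (* values: an infinite type, so input domains are unbounded *)
Definition store := var -> val.
Definition itrace := nat -> store.
Definition ftrace := list store.

Definition deterministic (M : itrace -> Prop) : Prop :=
  forall t t', M t -> M t' -> t 0%nat H = t' 0%nat H -> t = t'.

Definition input_domain_list (M : itrace -> Prop) (l : list val) : Prop :=
  NoDup l /\ forall h, In h l <-> exists t, M t /\ t 0%nat H = h.

Definition is_program (M : itrace -> Prop) : Prop :=
  deterministic M /\ exists l, l <> nil /\ input_domain_list M l.

Definition fdeterministic (S : ftrace -> Prop) : Prop :=
  forall s s' r r', S (s :: r) -> S (s' :: r') -> s H = s' H -> s :: r = s' :: r'.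

Definition is_obs (S : ftrace -> Prop) : Prop :=
  fdeterministic S /\ exists l : list ftrace, forall t, S t <-> In t l.

Definition tconcat (t : ftrace) (t' : itrace) : itrace :=
  fun i => if Nat.ltb i (length t) then nth i t (fun _ => 0%nat)
           else t' (i - length t)%nat.

Definition obs_le (S : ftrace -> Prop) (T : itrace -> Prop) : Prop :=
  forall t, S t -> exists t', T (tconcat t t').

Definition safety (P : (itrace -> Prop) -> Prop) : Prop :=
  forall S, is_program S -> ~ P S ->
    exists T, is_obs T /\ obs_le T S /\
      forall S', is_program S' -> obs_le T S' -> ~ P S'.

Definition dom (M : itrace -> Prop) : list val :=
  epsilon (inhabits nil) (input_domain_list M).

Definition out (M : itrace -> Prop) (h : val) : nat -> val :=
  epsilon (inhabits (fun _ => 0%nat))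
    (fun o => exists t, M t /\ t 0%nat H = h /\ forall i, o i = t (S i) O).

Definition outs (M : itrace -> Prop) : list (nat -> val) :=
  epsilon (inhabits nil)
    (fun l => NoDup l /\ forall o, In o l <-> exists h, In h (dom M) /\ out M h = o).

Definition ind (P : Prop) : R := if excluded_middle_informative P then 1 else 0.

Definition rsum {A} (f : A -> R) (l : list A) : R := fold_right Rplus 0 (map f l).
Definition rmax (l : list R) : R := fold_right Rmax 0 l.

Definition U (M : itrace -> Prop) (h : val) : R :=
  ind (In h (dom M)) / INR (length (dom M)).
Definition U_HO (M : itrace -> Prop) (x : val) (o : nat -> val) : R :=
  U M x * ind (out M x = o).
Definition U_O (M : itrace -> Prop) (o : nat -> val) : R :=
  rsum (fun h => U_HO M h o) (dom M).
Definition U_cond (M : itrace -> Prop) (x : val) (o : nat -> val) : R :=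
  U_HO M x o / U_O M o.

Definition log2 (x : R) : R := ln x / ln 2.

Definition V_H (M : itrace -> Prop) : R := rmax (map (U M) (dom M)).
Definition V_HO (M : itrace -> Prop) : R :=
  rsum (fun o => U_O M o * rmax (map (fun x => U_cond M x o) (dom M))) (outs M).
Definition ME (M : itrace -> Prop) : R :=
  log2 (1 / V_H M) - log2 (1 / V_HO M).

Fixpoint gsum_from (k : nat) (l : list R) : R :=
  match l with nil => 0 | p :: l' => INR k * p + gsum_from (S k) l' end.
Definition sort_desc (ps : list R) : list R :=
  epsilon (inhabits nil) (fun l => Permutation ps l /\ Sorted Rge l).
Definition guess (ps : list R) : R := gsum_from 1 (sort_desc ps).

Definition G_H (M : itrace -> Prop) : R := guess (map (U M) (dom M)).
Definition G_HO (M : itrace -> Prop) : R :=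
  rsum (fun o => U_O M o * guess (map (fun x => U_cond M x o) (dom M))) (outs M).
Definition GE (M : itrace -> Prop) : R := G_H M - G_HO M.

(* Under the uniform prior the leakage of a deterministic program depends only on how its
   outputs partition the input domain: ME = log2 (number of distinct outputs) and
   GE = (number of ordered pairs of inputs with different outputs) / (2 |H_M|).
   Both quantities can only grow when the domain is enlarged or the partition refined.
   Given a program S, observe the prefixes, long enough to separate every two distinct
   outputs, of all its traces: every program extending this observation contains the
   domain of S and separates at least the inputs S separates, so it leaks at least as
   much as S. Hence a violation of [leakage <= q] is witnessed by a finite observation. *)

From Stdlib Require Import Reals QArith Qreals List Permutation Sorted ClassicalEpsilon.
From Stdlib Require Import Lra Lia FunctionalExtensionality.
Open Scope R_scope.

Lemma ind_true (P : Prop) : P -> ind P = 1.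
Proof. intro; unfold ind; destruct (excluded_middle_informative P); tauto. Qed.

Lemma ind_false (P : Prop) : ~ P -> ind P = 0.
Proof. intro; unfold ind; destruct (excluded_middle_informative P); tauto. Qed.

Lemma ind_ext (P Q : Prop) : (P <-> Q) -> ind P = ind Q.
Proof.
  intro; unfold ind.
  destruct (excluded_middle_informative P), (excluded_middle_informative Q); tauto.
Qed.

Lemma ind_mono (P Q : Prop) : (P -> Q) -> ind P <= ind Q.
Proof.
  intro; unfold ind.
  destruct (excluded_middle_informative P), (excluded_middle_informative Q); try lra; tauto.
Qed.

Lemma ind_bounds (P : Prop) : 0 <= ind P <= 1.
Proof. unfold ind; destruct (excluded_middle_informative P); lra. Qed.

Lemma ind_not (P : Prop) : ind (~ P) = 1 - ind P.
Proof.
  unfold ind.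
  destruct (excluded_middle_informative P), (excluded_middle_informative (~ P)); try lra; tauto.
Qed.

Section Rsum.
Context {A : Type}.
Implicit Types (f g : A -> R) (l : list A).

Lemma rsum_nil f : rsum f nil = 0.
Proof. reflexivity. Qed.

Lemma rsum_cons f x l : rsum f (x :: l) = f x + rsum f l.
Proof. reflexivity. Qed.

Lemma rsum_ext_in f g l : (forall x, In x l -> f x = g x) -> rsum f l = rsum g l.
Proof.
  induction l as [|y l IH]; intros Hfg; [reflexivity|].
  rewrite !rsum_cons, Hfg, IH; simpl; auto.
  intros; apply Hfg; simpl; auto.
Qed.

Lemma rsum_scal f c l : rsum (fun x => c * f x) l = c * rsum f l.
Proof. induction l; [unfold rsum; simpl; lra|]. rewrite !rsum_cons, IHl; lra. Qed.

Lemma rsum_plus f g l : rsum (fun x => f x + g x) l = rsum f l + rsum g l.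
Proof. induction l; [unfold rsum; simpl; lra|]. rewrite !rsum_cons, IHl; lra. Qed.

Lemma rsum_const c l : rsum (fun _ => c) l = c * INR (length l).
Proof.
  induction l; [unfold rsum; simpl; lra|].
  rewrite rsum_cons, IHl; simpl length; rewrite S_INR; lra.
Qed.

Lemma length_pos l : l <> nil -> 0 < INR (length l).
Proof.
  destruct l; [congruence|]; intros _; simpl length; rewrite S_INR.
  pose proof (pos_INR (length l)); lra.
Qed.

Lemma rsum_le f g l : (forall x, In x l -> f x <= g x) -> rsum f l <= rsum g l.
Proof.
  induction l as [|y l IH]; intros Hfg; [unfold rsum; simpl; lra|].
  rewrite !rsum_cons.
  assert (f y <= g y) by (apply Hfg; simpl; auto).
  assert (rsum f l <= rsum g l) by (apply IH; intros; apply Hfg; simpl; auto).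
  lra.
Qed.

Lemma rsum_perm f l l' : Permutation l l' -> rsum f l = rsum f l'.
Proof. induction 1; rewrite ?rsum_cons; lra. Qed.

Lemma rsum_ind_ge0 (P : A -> Prop) l : 0 <= rsum (fun x => ind (P x)) l.
Proof.
  replace 0 with (rsum (fun _ : A => 0) l) by (rewrite rsum_const; lra).
  apply rsum_le; intros; apply ind_bounds.
Qed.

Lemma rsum_ind_le_length (P : A -> Prop) l : rsum (fun x => ind (P x)) l <= INR (length l).
Proof.
  rewrite <- (Rmult_1_l (INR _)), <- rsum_const.
  apply rsum_le; intros; apply ind_bounds.
Qed.

Lemma rsum_ind_ge1 (P : A -> Prop) l x : In x l -> P x -> 1 <= rsum (fun y => ind (P y)) l.
Proof.
  induction l as [|y l IH]; intros Hx HP; [destruct Hx|].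
  rewrite rsum_cons; destruct Hx as [<-|Hx].
  - rewrite ind_true by auto; pose proof (rsum_ind_ge0 P l); lra.
  - pose proof (IH Hx HP); pose proof (ind_bounds (P y)); lra.
Qed.

Lemma rsum_ind_eq_nodup (h : A -> R) l y : NoDup l -> In y l ->
  rsum (fun x => ind (y = x) * h x) l = h y.
Proof.
  induction l as [|x l IH]; intros Hnd Hy; [destruct Hy|].
  inversion Hnd; subst; rewrite rsum_cons.
  destruct Hy as [<-|Hy].
  - rewrite ind_true by reflexivity.
    rewrite (rsum_ext_in _ (fun _ => 0)), rsum_const; [lra|].
    intros z Hz; rewrite ind_false; [lra|]; intros <-; contradiction.
  - rewrite ind_false, IH by (auto; intros <-; contradiction); lra.
Qed.

End Rsum.

Lemma rsum_map {A B} (g : B -> R) (F : A -> B) l : rsum g (map F l) = rsum (fun x => g (F x)) l.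
Proof. unfold rsum; now rewrite map_map. Qed.

Lemma rsum_exchange {A B} (F : A -> B -> R) la lb :
  rsum (fun a => rsum (F a) lb) la = rsum (fun b => rsum (fun a => F a b) la) lb.
Proof.
  induction la as [|a la IH].
  - rewrite rsum_nil, (rsum_ext_in _ (fun _ => 0)), rsum_const; [lra|reflexivity].
  - rewrite rsum_cons, IH, <- rsum_plus; apply rsum_ext_in; intros; rewrite rsum_cons; lra.
Qed.

Definition two_valued (a : R) (l : list R) : Prop := Forall (fun x => x = 0 \/ x = a) l.

Lemma rmax_ge x l : In x l -> x <= rmax l.
Proof.
  induction l as [|y l IH]; intros Hx; [destruct Hx|].
  unfold rmax; simpl; fold (rmax l).
  destruct Hx as [<-|Hx]; [apply Rmax_l|].
  eapply Rle_trans; [apply IH; auto|apply Rmax_r].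
Qed.

Lemma rmax_two_valued_bounds a l : 0 <= a -> two_valued a l -> 0 <= rmax l <= a.
Proof.
  intros Ha; induction 1 as [|x l Hx _ IH]; unfold rmax; simpl; [lra|]; fold (rmax l).
  destruct Hx as [->| ->]; unfold Rmax; destruct (Rle_dec _ _); lra.
Qed.

Lemma rmax_two_valued a l : 0 <= a -> two_valued a l -> In a l -> rmax l = a.
Proof.
  intros Ha Hl Hin.
  pose proof (rmax_two_valued_bounds a l Ha Hl); pose proof (rmax_ge a l Hin); lra.
Qed.

Lemma gsum_from_app_zeros k l r : gsum_from k (l ++ repeat 0 r) = gsum_from k l.
Proof.
  revert k; induction l as [|x l IH]; intros; simpl.
  - revert k; induction r as [|r IHr]; intros; simpl; [lra|]; rewrite IHr; lra.
  - rewrite IH; lra.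
Qed.

Lemma gsum_from_repeat k a m :
  gsum_from k (repeat a m) = a * (INR m * INR k + INR m * (INR m - 1) / 2).
Proof.
  revert k; induction m as [|m IH]; intros; simpl repeat; simpl gsum_from; [simpl; lra|].
  rewrite IH, !S_INR; field.
Qed.

Lemma count_occ_rsum_ind a l : INR (count_occ Req_EM_T l a) = rsum (fun x => ind (x = a)) l.
Proof.
  induction l as [|x l IH]; [reflexivity|].
  rewrite rsum_cons; simpl count_occ.
  destruct (Req_EM_T x a).
  - rewrite S_INR, IH, ind_true by auto; lra.
  - rewrite IH, ind_false by auto; lra.
Qed.

Lemma two_valued_perm_repeat a l : a <> 0 -> two_valued a l ->
  exists r, Permutation l (repeat a (count_occ Req_EM_T l a) ++ repeat 0 r).
Proof.
  intros Ha; induction 1 as [|x l Hx _ [r Hr]]; [exists 0%nat; simpl; auto|].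
  destruct Hx as [->| ->].
  - exists (S r); simpl count_occ; destruct (Req_EM_T 0 a); [congruence|].
    eapply Permutation_trans; [apply perm_skip, Hr|apply Permutation_middle].
  - exists r; simpl count_occ; destruct (Req_EM_T a a); [|congruence].
    simpl; apply perm_skip, Hr.
Qed.

Lemma sorted_repeat_zeros a c r : 0 < a -> Sorted Rge (repeat a c ++ repeat 0 r).
Proof.
  intros Ha; induction c as [|c IH]; simpl.
  - induction r as [|r IHr]; simpl; constructor; auto.
    destruct r; simpl; constructor; lra.
  - constructor; auto.
    destruct c; simpl; [destruct r; simpl|]; constructor; lra.
Qed.

Lemma sorted_two_valued_repeat a s : 0 < a -> two_valued a s -> Sorted Rge s ->
  exists r, s = repeat a (count_occ Req_EM_T s a) ++ repeat 0 r.
Proof.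
  intros Ha; induction s as [|x s IH]; intros Hs Hsort; [exists 0%nat; reflexivity|].
  inversion Hs as [|? ? Hx Hs']; subst.
  apply Sorted_inv in Hsort as [Hsort Hhd].
  destruct (IH Hs' Hsort) as [r Hr].
  destruct Hx as [->| ->].
  - assert (Hc : count_occ Req_EM_T s a = 0%nat).
    { destruct (count_occ Req_EM_T s a); auto.
      rewrite Hr in Hhd; simpl in Hhd; inversion Hhd; lra. }
    exists (S r); simpl count_occ; destruct (Req_EM_T 0 a); [lra|].
    rewrite Hr at 1; rewrite Hc; reflexivity.
  - exists r; simpl count_occ; destruct (Req_EM_T a a); [|congruence].
    simpl; rewrite Hr at 1; reflexivity.
Qed.

(* With k entries equal to a, the optimal guessing order is a^k 0 ... 0, of cost a (1 + ... + k). *)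
Lemma guess_two_valued a l : 0 < a -> two_valued a l ->
  guess l = a * (rsum (fun x => ind (x = a)) l * (rsum (fun x => ind (x = a)) l + 1) / 2).
Proof.
  intros Ha Hl; rewrite <- count_occ_rsum_ind; unfold guess, sort_desc.
  set (s := epsilon _ _).
  assert (Hs : Permutation l s /\ Sorted Rge s).
  { apply epsilon_spec.
    destruct (two_valued_perm_repeat a l ltac:(lra) Hl) as [r Hr].
    eexists; split; [apply Hr|apply sorted_repeat_zeros; auto]. }
  destruct Hs as [Hperm Hsort].
  assert (Hs : two_valued a s).
  { unfold two_valued in *; rewrite Forall_forall in *; intros x Hx.
    apply Hl, Permutation_in with s; auto; now apply Permutation_sym. }
  destruct (sorted_two_valued_repeat a s Ha Hs Hsort) as [r ->].
  rewrite gsum_from_app_zeros, gsum_from_repeat.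
  rewrite (proj1 (Permutation_count_occ Req_EM_T l s) Hperm a); simpl INR; field.
Qed.

(** * Counting disagreeing pairs *)

Section Disagreements.
Context {A B : Type}.
Implicit Types (g : A -> B) (L : list A).

Definition disagreements_with g L z : R := rsum (fun y => ind (g z <> g y)) L.

Definition disagreements g L : R := rsum (disagreements_with g L) L.

Lemma disagreements_cons g z L :
  disagreements g (z :: L) = disagreements g L + 2 * disagreements_with g L z.
Proof.
  unfold disagreements, disagreements_with; rewrite !rsum_cons, (ind_false (g z <> g z)) by tauto.
  transitivity (rsum (fun y => ind (g z <> g y)) L +
     rsum (fun x => ind (g z <> g x) + rsum (fun y => ind (g x <> g y)) L) L).
  - f_equal; [lra|]; apply rsum_ext_in; intros; rewrite rsum_cons; f_equal.
    apply ind_ext; split; intros Hne E; apply Hne; auto.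
  - rewrite rsum_plus; lra.
Qed.

(* Pairs agreeing with z contribute at most disagreements_with z each, the others at most |L|. *)
Lemma disagreements_le g L z : disagreements g L <= 2 * INR (length L) * disagreements_with g L z.
Proof.
  apply Rle_trans with
    (rsum (fun x => disagreements_with g L z + ind (g x <> g z) * INR (length L)) L).
  - apply rsum_le; intros x Hx; destruct (classic (g x = g z)) as [E|E].
    + rewrite ind_false by tauto; unfold disagreements_with; rewrite E; lra.
    + rewrite ind_true by auto.
      pose proof (rsum_ind_ge0 (fun y => g z <> g y) L).
      pose proof (rsum_ind_le_length (fun y => g x <> g y) L).
      unfold disagreements_with in *; lra.
  - rewrite rsum_plus, rsum_const.
    replace (rsum (fun x => ind (g x <> g z) * INR (length L)) L)
      with (INR (length L) * disagreements_with g L z); [lra|].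
    unfold disagreements_with; rewrite <- rsum_scal; apply rsum_ext_in; intros.
    rewrite Rmult_comm; f_equal; apply ind_ext; split; intros Hne E; apply Hne; auto.
Qed.

Lemma disagreements_avg_cons g L z : L <> nil ->
  disagreements g L / INR (length L) <= disagreements g (z :: L) / INR (length (z :: L)).
Proof.
  intros HL; rewrite disagreements_cons; simpl length; rewrite S_INR.
  pose proof (length_pos L HL); pose proof (disagreements_le g L z).
  apply (Rmult_le_reg_r (INR (length L) * (INR (length L) + 1))); [nra|].
  field_simplify; lra.
Qed.

Lemma disagreements_avg_app g E L : L <> nil ->
  disagreements g L / INR (length L) <= disagreements g (E ++ L) / INR (length (E ++ L)).
Proof.
  intros HL; induction E as [|x E IH]; [simpl; lra|].
  eapply Rle_trans; [apply IH|]; simpl app; apply disagreements_avg_cons.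
  destruct E; simpl; [auto|congruence].
Qed.

Lemma disagreements_perm g L L' : Permutation L L' -> disagreements g L = disagreements g L'.
Proof.
  intros Hp; unfold disagreements, disagreements_with; rewrite (rsum_perm _ _ _ Hp).
  apply rsum_ext_in; intros; apply rsum_perm; auto.
Qed.

Lemma disagreements_refine g g' L :
  (forall x y, In x L -> In y L -> g x <> g y -> g' x <> g' y) ->
  disagreements g L <= disagreements g' L.
Proof.
  intros Hr; apply rsum_le; intros; apply rsum_le; intros; apply ind_mono; auto.
Qed.

Lemma Permutation_incl_app (D D' : list A) : NoDup D -> NoDup D' -> incl D D' ->
  exists E, Permutation D' (E ++ D).
Proof.
  intros HD HD' Hincl.
  set (notin := fun x => if excluded_middle_informative (In x D) then false else true).
  exists (filter notin D'); apply NoDup_Permutation; auto.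
  - apply NoDup_app; [apply NoDup_filter; auto|auto|].
    intros x Hx; apply filter_In in Hx as [_ Hx]; unfold notin in Hx.
    destruct (excluded_middle_informative (In x D)); [discriminate|assumption].
  - intros x; rewrite in_app_iff, filter_In; unfold notin.
    destruct (excluded_middle_informative (In x D)); split; intros Hx; auto.
    destruct Hx as [[Hx _]|Hx]; auto.
Qed.

Lemma disagreements_avg_mono g g' D D' : D <> nil -> NoDup D -> NoDup D' -> incl D D' ->
  (forall x y, In x D -> In y D -> g x <> g y -> g' x <> g' y) ->
  disagreements g D / INR (length D) <= disagreements g' D' / INR (length D').
Proof.
  intros Hne HD HD' Hincl Hr.
  destruct (Permutation_incl_app D D' HD HD' Hincl) as [E HE].
  rewrite (disagreements_perm g' _ _ HE), (Permutation_length HE).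
  eapply Rle_trans; [|apply disagreements_avg_app; auto].
  apply Rmult_le_compat_r; [apply Rlt_le, Rinv_0_lt_compat, length_pos; auto|].
  apply disagreements_refine; auto.
Qed.

End Disagreements.

(** * Leakage of a program under the uniform prior *)

Section Program.
Variable M : itrace -> Prop.
Hypothesis HM : is_program M.

Lemma dom_input_domain : input_domain_list M (dom M).
Proof. destruct HM as [_ [l [_ Hl]]]; unfold dom; apply epsilon_spec; eauto. Qed.

Lemma in_dom h : In h (dom M) <-> exists t, M t /\ t 0%nat H = h.
Proof. apply dom_input_domain. Qed.

Lemma dom_nonnil : dom M <> nil.
Proof.
  destruct HM as [_ [[|h l] [Hl [_ Hdom]]]]; [congruence|].
  destruct (proj1 (Hdom h) (or_introl eq_refl)) as [t Ht].
  intros E; assert (Hh : In h (dom M)) by (apply in_dom; eauto).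
  rewrite E in Hh; destruct Hh.
Qed.

Lemma out_spec h : In h (dom M) ->
  exists t, M t /\ t 0%nat H = h /\ forall i, out M h i = t (S i) O.
Proof.
  intros Hh; apply in_dom in Hh as [t [Ht Th]].
  unfold out; set (P := fun o : nat -> val =>
    exists t, M t /\ t 0%nat H = h /\ forall i, o i = t (S i) O).
  change (P (epsilon (inhabits (fun _ : nat => 0%nat)) P)).
  apply epsilon_spec; exists (fun i => t (S i) O), t; auto.
Qed.

Lemma outs_spec :
  NoDup (outs M) /\ forall o, In o (outs M) <-> exists h, In h (dom M) /\ out M h = o.
Proof.
  unfold outs; set (P := fun l : list (nat -> val) =>
    NoDup l /\ forall o, In o l <-> exists h, In h (dom M) /\ out M h = o).
  change (P (epsilon (inhabits nil) P)); apply epsilon_spec.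
  exists (nodup (fun x y => excluded_middle_informative (x = y)) (map (out M) (dom M))).
  split; [apply NoDup_nodup|]; intros o; rewrite nodup_In, in_map_iff; firstorder.
Qed.

Lemma in_outs o : In o (outs M) <-> exists h, In h (dom M) /\ out M h = o.
Proof. apply outs_spec. Qed.

Lemma out_in_outs h : In h (dom M) -> In (out M h) (outs M).
Proof. intros Hh; apply in_outs; eauto. Qed.

Definition dom_size : R := INR (length (dom M)).

Definition fiber_size (o : nat -> val) : R := rsum (fun h => ind (out M h = o)) (dom M).

Lemma dom_size_pos : 0 < dom_size.
Proof. apply length_pos, dom_nonnil. Qed.

Lemma fiber_size_ge1 o : In o (outs M) -> 1 <= fiber_size o.
Proof. intros Ho; apply in_outs in Ho as [h [Hh Eh]]; eapply rsum_ind_ge1; eauto. Qed.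

Lemma U_dom h : In h (dom M) -> U M h = / dom_size.
Proof. intros Hh; unfold U; rewrite ind_true by auto; fold dom_size; lra. Qed.

Lemma U_O_fiber o : U_O M o = fiber_size o / dom_size.
Proof.
  unfold U_O, U_HO, fiber_size, Rdiv; rewrite Rmult_comm, <- rsum_scal.
  apply rsum_ext_in; intros; rewrite U_dom; auto.
Qed.

Lemma U_cond_fiber x o : In x (dom M) -> In o (outs M) ->
  U_cond M x o = ind (out M x = o) / fiber_size o.
Proof.
  intros Hx Ho; pose proof (fiber_size_ge1 o Ho); pose proof dom_size_pos.
  unfold U_cond, U_HO; rewrite U_O_fiber, U_dom by auto; field; lra.
Qed.

Lemma U_two_valued : two_valued (/ dom_size) (map (U M) (dom M)).
Proof.
  apply Forall_forall; intros v Hv; apply in_map_iff in Hv as [x [<- Hx]].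
  right; apply U_dom; auto.
Qed.

Lemma U_cond_two_valued o : In o (outs M) ->
  two_valued (/ fiber_size o) (map (fun x => U_cond M x o) (dom M)).
Proof.
  intros Ho; apply Forall_forall; intros v Hv; apply in_map_iff in Hv as [x [<- Hx]].
  rewrite U_cond_fiber by auto.
  destruct (classic (out M x = o)); [rewrite ind_true|rewrite ind_false]; auto;
    [right|left]; unfold Rdiv; lra.
Qed.

Lemma U_cond_count o : In o (outs M) ->
  rsum (fun x => ind (x = / fiber_size o)) (map (fun x => U_cond M x o) (dom M)) = fiber_size o.
Proof.
  intros Ho; pose proof (fiber_size_ge1 o Ho).
  assert (0 < / fiber_size o) by (apply Rinv_0_lt_compat; lra).
  rewrite rsum_map; unfold fiber_size at 2; apply rsum_ext_in; intros x Hx.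
  apply ind_ext; rewrite U_cond_fiber by auto.
  destruct (classic (out M x = o)) as [E|E].
  - rewrite ind_true by auto; unfold Rdiv; split; auto; lra.
  - rewrite ind_false by auto; unfold Rdiv; split; [|tauto]; lra.
Qed.

Lemma rsum_outs_fiber (h : (nat -> val) -> R) :
  rsum (fun o => fiber_size o * h o) (outs M) = rsum (fun x => h (out M x)) (dom M).
Proof.
  unfold fiber_size.
  transitivity (rsum (fun o => rsum (fun x => ind (out M x = o) * h o) (dom M)) (outs M)).
  - apply rsum_ext_in; intros; rewrite Rmult_comm, <- rsum_scal; apply rsum_ext_in; intros; lra.
  - rewrite rsum_exchange; apply rsum_ext_in; intros x Hx.
    apply rsum_ind_eq_nodup; [apply outs_spec|apply out_in_outs; auto].
Qed.

Lemma outs_length_pos : 0 < INR (length (outs M)).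
Proof.
  apply length_pos; destruct (dom M) as [|h l] eqn:E; [now destruct dom_nonnil|].
  assert (Hin : In (out M h) (outs M)) by (apply out_in_outs; rewrite E; simpl; auto).
  intros Enil; rewrite Enil in Hin; destruct Hin.
Qed.

(* V(H) = 1/|H_M| and V(H|O) = |outs|/|H_M|. *)
Lemma ME_closed_form : ME M = log2 (INR (length (outs M))).
Proof.
  pose proof dom_size_pos; pose proof outs_length_pos.
  assert (HVH : V_H M = / dom_size).
  { apply rmax_two_valued; [apply Rlt_le, Rinv_0_lt_compat; auto|apply U_two_valued|].
    destruct (dom M) as [|h l] eqn:E; [now destruct dom_nonnil|].
    apply in_map_iff; exists h; split; [apply U_dom; rewrite E|]; simpl; auto. }
  assert (HVHO : V_HO M = INR (length (outs M)) / dom_size).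
  { unfold V_HO; transitivity (rsum (fun _ => / dom_size) (outs M));
      [|rewrite rsum_const; field; lra].
    apply rsum_ext_in; intros o Ho; pose proof (fiber_size_ge1 o Ho).
    rewrite U_O_fiber, (rmax_two_valued (/ fiber_size o)); [field; lra| | |].
    - apply Rlt_le, Rinv_0_lt_compat; lra.
    - apply U_cond_two_valued; auto.
    - destruct (proj1 (in_outs o) Ho) as [h [Hh Eh]]; apply in_map_iff; exists h; split; auto.
      rewrite U_cond_fiber, ind_true by auto; unfold Rdiv; lra. }
  unfold ME, log2; rewrite HVH, HVHO.
  replace (1 / / dom_size) with dom_size by (field; lra).
  replace (1 / (INR (length (outs M)) / dom_size))
    with (dom_size * / INR (length (outs M))) by (field; lra).
  rewrite ln_mult, ln_Rinv by (try apply Rinv_0_lt_compat; lra).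
  field; pose proof ln_lt_2; lra.
Qed.

(* G(H) = (n+1)/2 and G(H|O) = sum_o |o| (|o|+1) / (2n); the difference is the number of
   disagreeing pairs, n^2 - sum_o |o|^2, over 2n. *)
Lemma GE_closed_form : GE M = disagreements (out M) (dom M) / (2 * dom_size).
Proof.
  pose proof dom_size_pos.
  assert (HGH : G_H M = (dom_size + 1) / 2).
  { unfold G_H; rewrite (guess_two_valued (/ dom_size));
      [|apply Rinv_0_lt_compat; auto|apply U_two_valued].
    rewrite rsum_map, (rsum_ext_in _ (fun _ => 1)), rsum_const; fold dom_size; [field; lra|].
    intros; apply ind_true, U_dom; auto. }
  assert (HGHO : G_HO M = (rsum (fun o => fiber_size o * fiber_size o) (outs M)
                           + rsum (fun o => fiber_size o * 1) (outs M)) / (2 * dom_size)).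
  { unfold G_HO, Rdiv; rewrite <- rsum_plus, Rmult_comm, <- rsum_scal.
    apply rsum_ext_in; intros o Ho; pose proof (fiber_size_ge1 o Ho).
    rewrite (guess_two_valued (/ fiber_size o));
      [|apply Rinv_0_lt_compat; lra|apply U_cond_two_valued; auto].
    rewrite U_cond_count, U_O_fiber by auto; field; lra. }
  assert (Hdis : disagreements (out M) (dom M)
                 = dom_size * dom_size - rsum (fun x => fiber_size (out M x)) (dom M)).
  { unfold disagreements, disagreements_with.
    transitivity (rsum (fun x => 1 * dom_size + (-1) * fiber_size (out M x)) (dom M)).
    - apply rsum_ext_in; intros x Hx; unfold fiber_size, dom_size.
      rewrite <- rsum_const, <- rsum_scal, <- rsum_plus; apply rsum_ext_in; intros y Hy.
      rewrite (ind_ext _ (~ (out M y = out M x))), ind_not; [lra|].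
      split; intros Hne E; apply Hne; auto.
    - rewrite rsum_plus, rsum_scal, rsum_const, rsum_scal; fold dom_size; lra. }
  unfold GE; rewrite HGH, HGHO, !rsum_outs_fiber, rsum_const, Hdis; fold dom_size.
  field; lra.
Qed.

End Program.

(** * Monotonicity under extension and refinement *)

Definition refines (S S' : itrace -> Prop) : Prop :=
  incl (dom S) (dom S') /\
  forall h1 h2, In h1 (dom S) -> In h2 (dom S) -> out S h1 <> out S h2 -> out S' h1 <> out S' h2.

Lemma outs_length_mono S S' : is_program S -> is_program S' -> refines S S' ->
  (length (outs S) <= length (outs S'))%nat.
Proof.
  intros HS HS' [Hincl Hsep].
  set (rep := fun o => epsilon (inhabits 0%nat) (fun h => In h (dom S) /\ out S h = o)).
  assert (Hrep : forall o, In o (outs S) -> In (rep o) (dom S) /\ out S (rep o) = o).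
  { intros o Ho; apply (in_outs S HS) in Ho; apply epsilon_spec; auto. }
  rewrite <- (length_map (fun o => out S' (rep o))); apply NoDup_incl_length.
  - apply NoDup_map_NoDup_ForallPairs; [|apply (outs_spec S HS)].
    intros o1 o2 H1 H2 E.
    destruct (Hrep o1 H1) as [D1 E1], (Hrep o2 H2) as [D2 E2].
    apply NNPP; intros Hne; apply (Hsep (rep o1) (rep o2)); auto; congruence.
  - intros v Hv; apply in_map_iff in Hv as [o [<- Ho]].
    apply out_in_outs; auto; apply Hincl, Hrep; auto.
Qed.

Lemma ME_mono S S' : is_program S -> is_program S' -> refines S S' -> ME S <= ME S'.
Proof.
  intros HS HS' Href; rewrite (ME_closed_form S HS), (ME_closed_form S' HS').
  unfold log2; apply Rmult_le_compat_r; [apply Rlt_le, Rinv_0_lt_compat; pose proof ln_lt_2; lra|].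
  pose proof (outs_length_pos S HS) as Hpos.
  destruct (Rle_lt_or_eq_dec _ _ (le_INR _ _ (outs_length_mono S S' HS HS' Href))) as [Hlt|Heq].
  - apply Rlt_le, ln_increasing; auto.
  - rewrite Heq; lra.
Qed.

Lemma GE_mono S S' : is_program S -> is_program S' -> refines S S' -> GE S <= GE S'.
Proof.
  intros HS HS' [Hincl Hsep]; rewrite (GE_closed_form S HS), (GE_closed_form S' HS').
  pose proof (dom_size_pos S HS); pose proof (dom_size_pos S' HS').
  assert (Hhalf : forall d n, 0 < n -> d / (2 * n) = / 2 * (d / n)) by (intros; field; lra).
  rewrite !Hhalf by auto; apply Rmult_le_compat_l; [lra|].
  apply disagreements_avg_mono; auto.
  - apply dom_nonnil; auto.
  - apply dom_input_domain; auto.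
  - apply dom_input_domain; auto.
Qed.

(** * Finite observations *)

Lemma forall_In_exists_bounded {A} (l : list A) (P : A -> nat -> Prop) :
  (forall a, In a l -> exists i, P a i) ->
  exists N, forall a, In a l -> exists i, (i < N)%nat /\ P a i.
Proof.
  induction l as [|a l IH]; intros Hl; [exists 0%nat; intros a []|].
  destruct IH as [N HN]; [intros; apply Hl; simpl; auto|].
  destruct (Hl a (or_introl eq_refl)) as [i Hi].
  exists (S (Nat.max N i)); intros b [<-|Hb].
  - exists i; split; auto; lia.
  - destruct (HN b Hb) as [j [Hj Pj]]; exists j; split; auto; lia.
Qed.

Lemma separation_depth (S : itrace -> Prop) : exists N, forall h1 h2,
  In h1 (dom S) -> In h2 (dom S) -> out S h1 <> out S h2 ->
  exists i, (i < N)%nat /\ out S h1 i <> out S h2 i.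
Proof.
  destruct (forall_In_exists_bounded (list_prod (dom S) (dom S))
     (fun p i => out S (fst p) <> out S (snd p) -> out S (fst p) i <> out S (snd p) i))
     as [N HN].
  { intros [h1 h2] _; simpl.
    destruct (classic (exists i, out S h1 i <> out S h2 i)) as [[i Hi]|Hall]; [eauto|].
    exists 0%nat; intros Hne; exfalso; apply Hne, functional_extensionality; intros i.
    apply NNPP; intros Hi; apply Hall; eauto. }
  exists N; intros h1 h2 H1 H2 Hne.
  destruct (HN (h1, h2)) as [i [Hi Pi]]; [apply in_prod; auto|eauto].
Qed.

Definition trace_of (S : itrace -> Prop) (h : val) : itrace :=
  epsilon (inhabits (fun _ _ => 0%nat)) (fun t => S t /\ t 0%nat H = h).

Definition prefix (S : itrace -> Prop) (N : nat) (h : val) : ftrace :=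
  map (trace_of S h) (seq 0 (Datatypes.S N)).

Definition prefix_obs (S : itrace -> Prop) (N : nat) : ftrace -> Prop :=
  fun l => In l (map (prefix S N) (dom S)).

Section PrefixObservation.
Variables (S : itrace -> Prop) (N : nat).
Hypothesis HS : is_program S.

Lemma trace_of_spec h : In h (dom S) -> S (trace_of S h) /\ trace_of S h 0%nat H = h.
Proof. intros Hh; apply (in_dom S HS) in Hh; unfold trace_of; apply epsilon_spec; auto. Qed.

Lemma out_trace_of h i : In h (dom S) -> out S h i = trace_of S h (Datatypes.S i) O.
Proof.
  intros Hh; destruct (out_spec S HS h Hh) as [t [Ht [Th ->]]].
  destruct (trace_of_spec h Hh) as [Htr Htr0].
  destruct HS as [Hdet _]; rewrite (Hdet t (trace_of S h)); auto; congruence.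
Qed.

Lemma tconcat_prefix h t i : (i <= N)%nat -> tconcat (prefix S N h) t i = trace_of S h i.
Proof.
  intros Hi; unfold tconcat, prefix; rewrite length_map, length_seq.
  replace (Nat.ltb i (Datatypes.S N)) with true by (symmetry; apply Nat.ltb_lt; lia).
  rewrite (nth_indep _ _ (trace_of S h 0%nat)) by (rewrite length_map, length_seq; lia).
  rewrite map_nth, seq_nth by lia; reflexivity.
Qed.

Lemma prefix_obs_is_obs : is_obs (prefix_obs S N).
Proof.
  split; [|exists (map (prefix S N) (dom S)); reflexivity].
  intros s s' r r' H1 H2 Hs.
  apply in_map_iff in H1 as [h1 [E1 I1]]; apply in_map_iff in H2 as [h2 [E2 I2]].
  assert (F1 : trace_of S h1 0%nat = s) by (unfold prefix in E1; simpl in E1; congruence).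
  assert (F2 : trace_of S h2 0%nat = s') by (unfold prefix in E2; simpl in E2; congruence).
  assert (h1 = h2) as <-.
  { rewrite <- (proj2 (trace_of_spec h1 I1)), <- (proj2 (trace_of_spec h2 I2)); congruence. }
  congruence.
Qed.

Lemma prefix_obs_le : obs_le (prefix_obs S N) S.
Proof.
  intros t Ht; apply in_map_iff in Ht as [h [<- Hh]].
  exists (fun i => trace_of S h (i + Datatypes.S N)%nat).
  replace (tconcat _ _) with (trace_of S h); [apply trace_of_spec; auto|].
  apply functional_extensionality; intros i; destruct (Nat.le_gt_cases i N).
  - rewrite tconcat_prefix; auto.
  - unfold tconcat, prefix; rewrite length_map, length_seq.
    replace (Nat.ltb i (Datatypes.S N)) with false by (symmetry; apply Nat.ltb_ge; lia).
    f_equal; lia.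
Qed.

Lemma prefix_obs_extension S' h : is_program S' -> obs_le (prefix_obs S N) S' ->
  In h (dom S) -> In h (dom S') /\ forall i, (i < N)%nat -> out S' h i = out S h i.
Proof.
  intros HS' Hle Hh.
  destruct (Hle (prefix S N h)) as [t Ht]; [apply in_map_iff; eauto|].
  set (u := tconcat (prefix S N h) t) in *.
  assert (Hu0 : u 0%nat H = h)
    by (unfold u; rewrite tconcat_prefix by lia; apply trace_of_spec; auto).
  assert (Hh' : In h (dom S')) by (apply (in_dom S' HS'); eauto).
  split; auto; intros i Hi.
  destruct (out_spec S' HS' h Hh') as [t' [Ht' [Ht'0 ->]]].
  destruct HS' as [Hdet _]; rewrite (Hdet t' u) by (auto; congruence).
  rewrite out_trace_of by auto; unfold u; rewrite tconcat_prefix by lia; reflexivity.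
Qed.

End PrefixObservation.

Lemma prefix_obs_refines S : is_program S ->
  exists N, forall S', is_program S' -> obs_le (prefix_obs S N) S' -> refines S S'.
Proof.
  intros HS; destruct (separation_depth S) as [N HN]; exists N; intros S' HS' Hle; split.
  - intros h Hh; apply (prefix_obs_extension S N HS S' h HS' Hle Hh).
  - intros h1 h2 H1 H2 Hne E.
    destruct (HN h1 h2 H1 H2 Hne) as [i [Hi Hdiff]]; apply Hdiff.
    rewrite <- (proj2 (prefix_obs_extension S N HS S' h1 HS' Hle H1) i Hi).
    rewrite <- (proj2 (prefix_obs_extension S N HS S' h2 HS' Hle H2) i Hi), E.
    reflexivity.
Qed.

Definition observably_bounded_below (L : (itrace -> Prop) -> R) : Prop :=
  forall S, is_program S -> exists T, is_obs T /\ obs_le T S /\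
    forall S', is_program S' -> obs_le T S' -> L S <= L S'.

Lemma safety_sublevel (L : (itrace -> Prop) -> R) (q : R) :
  observably_bounded_below L -> safety (fun M => L M <= q).
Proof.
  intros HL S HS Hviol; destruct (HL S HS) as [T [HT [HTS Hbound]]].
  exists T; split; [|split]; auto.
  intros S' HS' HTS' Hle; apply Hviol; pose proof (Hbound S' HS' HTS'); lra.
Qed.

Lemma refinement_bounded_below (L : (itrace -> Prop) -> R) :
  (forall S S', is_program S -> is_program S' -> refines S S' -> L S <= L S') ->
  observably_bounded_below L.
Proof.
  intros Hmono S HS; destruct (prefix_obs_refines S HS) as [N HN].
  exists (prefix_obs S N); split; [apply prefix_obs_is_obs; auto|split].
  - apply prefix_obs_le; auto.
  - intros S' HS' Hle; apply Hmono; auto.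
Qed.

Theorem theorem16 : forall q : Q,
  safety (fun M => (ME M <= Q2R q)%R) /\ safety (fun M => (GE M <= Q2R q)%R).
Proof.
  intros q; split; apply safety_sublevel, refinement_bounded_below.
  - exact ME_mono.
  - exact GE_mono.
Qed.
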